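(* Let $q$ be a power of an odd prime, write $q-1=2^s r$ with $r$ odd, let $c\in\mathbb{F}_q^*$, and $f(X)=c(X^{q+1}-X^2)$ on $\mathbb{F}_{q^2}$. Then for every divisor $d$ of $r$ there are $\frac{\varphi(d)(q-1)}{2\,\mathrm{ord}_{3d}(4)}$ cycles of length $2\,\mathrm{ord}_{3d}(4)$ in the functional graph of $f$, and these are the only cycles of length greater than $1$.
   Context: The functional graph of $f$ is the directed graph on $\mathbb{F}_{q^2}$ with edges $x\to f(x)$. $\varphi$ is Euler's totient function and $\mathrm{ord}_m(n)$ is the multiplicative order of $n$ modulo $m$. *)

From mathcomp Require Import all_boot all_order all_algebra all_field.
Set Implicit Arguments. Unset Strict Implicit. Unset Printing Implicit Defensive.

(* Multiplicative order of n modulo m: the least k >= 1 with n^k = 1 (mod m).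
   For coprime n, m with m >= 1 such k exists and is <= m, so searching in
   1..m finds it. *)
Definition ordn (m n : nat) : nat :=
  (find (fun k => n ^ k.+1 %% m == 1 %% m) (iota 0 m)).+1.

Section FunGraph.
Variable T : finType.
Variable f : T -> T.

Definition periodic_of (L : nat) (x : T) : bool :=
  [&& 0 < L, iter L f x == x & [forall m : 'I_L, (0 < m) ==> (iter m f x != x)]].

Definition cycles_of_length (L : nat) : {set {set T}} :=
  [set [set iter i f x | i : 'I_L] | x in [pred x | periodic_of L x]].
End FunGraph.

From mathcomp Require Import all_boot all_order all_algebra all_field.
From mathcomp Require Import cyclic zify ring.
Set Implicit Arguments. Unset Strict Implicit. Unset Printing Implicit Defensive.

(* Write u = x^q - x and v = x^q + x (subq and addq below), so that f(x) = c x u.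
   As u^q = -u, v^q = v and c^q = c, one gets u(f x) = -c u v and v(f x) = -c u^2,
   hence f(f x) = z(x) x and z(f x) = z(x)^2 for z = -c^3 v u^2 (zf below), an
   element of F_q.  So f^(2m)(x) = z(x)^((4^m-1)/3) x, while no odd iterate fixes a
   point with z(x) != 0: applying Frobenius to f^(2m+1)(x) = x would give 1 = -1.
   If z(x) has multiplicative order d, then x is periodic iff d is odd, with period
   2m for the least m such that d | (4^m-1)/3, i.e. m = ord_{3d}(4); periodic points
   have z(x) != 0, so d | r.  Finally x |-> (u, v) is a bijection onto
   {u | u^q = -u} x F_q, whose first factor has q elements, so each fibre of z over
   F_q^* has q - 1 points and exactly phi(d)(q-1) points have z(x) of order d. *)

Section FunctionalGraph.
Variables (T : finType) (f : T -> T) (L : nat).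

Lemma iter_modn x n : iter L f x = x -> iter n f x = iter (n %% L) f x.
Proof.
move=> fLx; rewrite {1}(divn_eq n L) addnC iterD; congr (iter _ f _).
by elim: (n %/ L) => // k IHk; rewrite mulSn iterD IHk fLx.
Qed.

Lemma periodicP x :
  reflect (0 < L /\ forall n, (iter n f x == x) = (L %| n)) (periodic_of f L x).
Proof.
apply: (iffP and3P) => [[L_gt0 /eqP fLx /forallP minL] | [L_gt0 fxE]].
  split=> // n; rewrite (iter_modn n fLx) /dvdn.
  have [-> | nL_gt0] := posnP (n %% L); first by rewrite eqxx.
  have /implyP/(_ nL_gt0)/negbTE := minL (Ordinal (ltn_pmod n L_gt0)).
  by rewrite /= => ->.
split=> //; first by rewrite fxE.
by apply/forallP => -[m ltmL] /=; apply/implyP => m_gt0; rewrite fxE gtnNdvd.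
Qed.

Lemma periodic_iter x i : periodic_of f L x -> periodic_of f L (iter i f x).
Proof.
case/periodicP=> L_gt0 fxE; apply/periodicP; split=> // n; rewrite -fxE.
have back : iter (L * i - i) f (iter i f x) = x.
  by apply/eqP; rewrite -iterD subnK ?leq_pmull // fxE dvdn_mulr.
apply/eqP/eqP => [fnix | fnx]; last by rewrite -iterD addnC iterD fnx.
by rewrite -{1}back -!iterD addnAC addnC !iterD fnix back.
Qed.

Definition cycle_set x : {set T} := [set iter i f x | i : 'I_L].

Lemma card_cycle_set x : periodic_of f L x -> #|cycle_set x| = L.
Proof.
move=> Px; rewrite card_imset ?card_ord //.
have /periodicP[_ fxE] := Px.
suff le_inj (i j : 'I_L) : i <= j -> iter i f x = iter j f x -> i = j.
  move=> i j eqij; case: (leqP i j) => [le_ij | /ltnW le_ji]; first exact: le_inj.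
  exact/esym/le_inj.
move=> le_ij eqij; apply/val_inj/eqP; rewrite eqn_leq le_ij /=.
have /periodicP[_ fixE] := periodic_iter i Px.
have := fixE (j - i); rewrite -iterD subnK // -eqij eqxx.
move/esym => dvdL; rewrite leqNgt -subn_gt0; apply: contraTN dvdL => ji_gt0.
by rewrite gtnNdvd // (leq_ltn_trans (leq_subr i j)).
Qed.

Lemma cycle_set_iter x i : periodic_of f L x -> cycle_set (iter i f x) = cycle_set x.
Proof.
move=> Px; have /periodicP[L_gt0 fxE] := Px.
apply/eqP; rewrite eqEcard !card_cycle_set ?periodic_iter // leqnn andbT.
apply/subsetP => _ /imsetP[j _ ->]; apply/imsetP.
exists (Ordinal (ltn_pmod (j + i) L_gt0)) => //=.
by rewrite -iter_modn ?iterD //; apply/eqP; rewrite fxE.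
Qed.

Lemma card_cycles_in (A : {set T}) :
    (forall x, x \in A -> f x \in A) -> {in A, forall x, periodic_of f L x} ->
  #|cycle_set @: A| * L = #|A|.
Proof.
move=> fA PA; have iterA n x : x \in A -> iter n f x \in A.
  by move=> Ax; elim: n => //= n; apply: fA.
rewrite -[#|A|]sum1_card (partition_big_imset cycle_set) /= -sum_nat_const.
apply: eq_bigr => _ /imsetP[x Ax ->]; rewrite sum1_card -(card_cycle_set (PA x Ax)).
apply: eq_card => y; rewrite [RHS]unfold_in /=.
apply/idP/andP => [/imsetP[i _ ->] | [Ay /eqP <-]].
  by rewrite iterA // cycle_set_iter ?PA.
by have /periodicP[L_gt0 _] := PA y Ay; apply/imsetP; exists (Ordinal L_gt0).
Qed.

End FunctionalGraph.

Lemma totient_leq n : totient n <= n.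
Proof.
rewrite totient_count_coprime -[leqRHS]subn0 -[leqRHS]muln1 -sum_nat_const_nat.
by apply: leq_sum => i _; apply: leq_b1.
Qed.

Lemma expn_ordn_dvd m n k :
  0 < m -> coprime n m -> (n ^ k == 1 %[mod m]) = (ordn m n %| k).
Proof.
move=> m_gt0 co_nm; set P := fun j => n ^ j.+1 %% m == 1 %% m.
have hasP : has P (iota 0 m).
  have phi_gt0 : 0 < totient m by rewrite totient_gt0.
  apply/hasP; exists (totient m).-1.
    by rewrite mem_iota add0n (leq_trans _ (totient_leq m)) // prednK.
  by rewrite /P prednK //; apply/eqP/Euler_exp_totient.
have lt_find_m : find P (iota 0 m) < m by rewrite -[ltnRHS](size_iota 0) -has_find.
have expn_ordn : n ^ ordn m n = 1 %[mod m].
  by apply/eqP; have := nth_find 0 hasP; rewrite nth_iota.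
have ordn_min j : 0 < j < ordn m n -> (n ^ j == 1 %[mod m]) = false.
  case/andP=> j_gt0; rewrite ltnS => le_j_find.
  have := @before_find _ 0 P (iota 0 m) j.-1.
  rewrite nth_iota ?add0n /P prednK //; first exact.
  exact: leq_trans le_j_find (ltnW lt_find_m).
rewrite [in n ^ k](divn_eq k (ordn m n)) expnD expnM expnAC -modnMml -modnXm expn_ordn.
rewrite modnXm exp1n modnMml mul1n /dvdn.
have [-> | k_gt0] := posnP (k %% ordn m n); first by rewrite eqxx.
by rewrite ordn_min ?k_gt0 ?ltn_pmod.
Qed.

Fixpoint repunit4 m := if m is m'.+1 then (4 * repunit4 m').+1 else 0.

Lemma repunit4E m : 3 * repunit4 m + 1 = 4 ^ m.
Proof. by elim: m => // m IHm; rewrite expnS -IHm /=; lia. Qed.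

Lemma odd_repunit4 m : 0 < m -> odd (repunit4 m).
Proof. by case: m => //= m _; rewrite oddM. Qed.

Lemma dvdn_repunit4 d m : odd d -> (d %| repunit4 m) = (ordn (3 * d) 4 %| m).
Proof.
move=> odd_d; have d_gt0 : 0 < d by case: d odd_d.
have co_4_3d : coprime 4 (3 * d).
  by rewrite coprimeMr (_ : 4 = 2 ^ 2) // !coprime_pexpl // !coprime2n odd_d.
rewrite -expn_ordn_dvd ?muln_gt0 // -repunit4E eqn_mod_dvd ?leq_addl //.
by rewrite addnK dvdn_pmul2l.
Qed.

Lemma dvdn_mul2l_half o n : (2 * o %| n) = ~~ odd n && (o %| n./2).
Proof.
have [odd_n | even_n] /= := boolP (odd n).
  by apply: contraTF odd_n => /(dvdn_trans (dvdn_mulr o (dvdnn 2))); rewrite dvdn2.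
by rewrite -[in LHS](even_halfK even_n) -mul2n dvdn_pmul2l.
Qed.

Import GRing.Theory.
Local Open Scope ring_scope.

Lemma card_primitive_roots (F : finFieldType) d : (d %| #|F|.-1)%N ->
  #|[set w : F | d.-primitive_root w]| = totient d.
Proof.
move=> dvd_d_F; set n := #|F|.-1.
have n_gt0 : (0 < n)%N by rewrite /n -subn1 subn_gt0 finNzRing_gt1.
have /hasP[zeta _ prim_zeta] : has n.-primitive_root (enum [set x : F | x != 0]).
  apply: has_prim_root => //; last by rewrite -cardE cardsE cardC1.
  - apply/allP => x; rewrite mem_enum inE => x_neq0; rewrite unity_rootE.
    apply/eqP/(mulIf x_neq0); rewrite mul1r -exprSr /n prednK ?expf_card //.
    exact: ltnW (finNzRing_gt1 F).
  - exact: enum_uniq.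
have prim_om := dvdn_prim_root prim_zeta dvd_d_F; set om := zeta ^+ _ in prim_om.
have -> : [set w : F | d.-primitive_root w] = [set om ^+ i | i : 'I_d & coprime i d].
  apply/setP => w; rewrite inE; apply/idP/imsetP => [prim_w | [i]].
    have [i def_w] := prim_rootP prim_om (prim_expr_order prim_w).
    by exists i; rewrite // inE -(prim_root_exp_coprime _ prim_om) -def_w.
  by rewrite inE => co_id ->; rewrite prim_root_exp_coprime.
rewrite card_in_imset => [|i j _ _ /eqP]; last first.
  by rewrite (eq_prim_root_expr prim_om) !modn_small // => /eqP/val_inj.
rewrite totient_count_coprime big_mkord -sum1_card big_mkcond /=.
by apply: eq_bigr => i _; rewrite inE coprime_sym; case: coprime.
Qed.

Lemma prim_order_uniq (R : nzRingType) d e (z : R) :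
  d.-primitive_root z -> e.-primitive_root z -> d = e.
Proof.
move=> prim_d prim_e; apply/eqP; rewrite eqn_dvd.
rewrite (prim_order_dvd prim_d) (prim_order_dvd prim_e).
by rewrite (prim_expr_order prim_d) (prim_expr_order prim_e) eqxx.
Qed.

Section QuadraticMap.
Variables (F : finFieldType) (q : nat) (c : F).
Hypothesis card_F : #|F| = (q * q)%N.
Hypothesis frobD : forall x y : F, (x + y) ^+ q = x ^+ q + y ^+ q.
Hypothesis two_neq0 : (2 : F) != 0.
Hypothesis cq : c ^+ q = c.
Hypothesis c_neq0 : c != 0.

Lemma q_gt1 : (1 < q)%N.
Proof. by have := finNzRing_gt1 F; rewrite card_F; case: q => [|[]]. Qed.

Lemma frob0 : (0 : F) ^+ q = 0.
Proof. by rewrite expr0n gtn_eqF // ltnW // q_gt1. Qed.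

Lemma frobK (x : F) : x ^+ q ^+ q = x.
Proof. by rewrite -exprM -card_F expf_card. Qed.

Lemma frobN (x : F) : (- x) ^+ q = - x ^+ q.
Proof. by apply/eqP; rewrite -subr_eq0 opprK -frobD addNr frob0. Qed.

Lemma frobB (x y : F) : (x - y) ^+ q = x ^+ q - y ^+ q.
Proof. by rewrite frobD frobN. Qed.

Lemma frob_half (a b : F) : a ^+ q = - a -> b ^+ q = b -> ((b - a) / 2) ^+ q = (b + a) / 2.
Proof. by move=> aq bq; rewrite exprMn frobB aq bq exprVn frobD expr1n opprK. Qed.

Definition fmap (x : F) := c * (x ^+ q.+1 - x ^+ 2).
Definition addq (x : F) := x ^+ q + x.
Definition subq (x : F) := x ^+ q - x.
Definition zf (x : F) := - c ^+ 3 * addq x * subq x ^+ 2.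

Lemma addq_subqK (x : F) : (addq x - subq x) / 2 = x.
Proof. by rewrite /addq /subq; field. Qed.

Lemma addq_frob (x : F) : addq x ^+ q = addq x.
Proof. by rewrite /addq frobD frobK addrC. Qed.

Lemma subq_frob (x : F) : subq x ^+ q = - subq x.
Proof. by rewrite /subq frobB frobK opprB. Qed.

Lemma zf_frob (x : F) : zf x ^+ q = zf x.
Proof. by rewrite /zf !exprMn frobN exprAC cq addq_frob subq_frob mulrNN. Qed.

Lemma fmapE (x : F) : fmap x = c * x * subq x.
Proof. by rewrite /fmap /subq exprS; ring. Qed.

Lemma subq_fmap (x : F) : subq (fmap x) = - c * subq x * addq x.
Proof. by rewrite {1}/subq fmapE !exprMn cq subq_frob /addq /subq; ring. Qed.

Lemma addq_fmap (x : F) : addq (fmap x) = - c * subq x ^+ 2.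
Proof. by rewrite {1}/addq fmapE !exprMn cq subq_frob /subq; ring. Qed.

Lemma zf_fmap (x : F) : zf (fmap x) = zf x ^+ 2.
Proof. by rewrite {1}/zf subq_fmap addq_fmap /zf; ring. Qed.

Lemma fmap2 (x : F) : fmap (fmap x) = zf x * x.
Proof. by rewrite {1}fmapE subq_fmap fmapE /zf; ring. Qed.

Lemma iter_fmap_double m (x : F) : iter (2 * m) fmap x = zf x ^+ repunit4 m * x.
Proof.
elim: m x => [|m IHm] x; first by rewrite mul1r.
by rewrite mulnS !iterSr IHm zf_fmap !zf_fmap fmap2 -!exprM mulrA -exprSr mulnA.
Qed.

Lemma x_neq0_zf (x : F) : zf x != 0 -> x != 0.
Proof. by apply: contraNneq => ->; rewrite /zf /addq frob0 add0r mulr0 mul0r. Qed.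

Lemma iter_fmap_odd m (x : F) : zf x != 0 -> iter (2 * m).+1 fmap x != x.
Proof.
move=> zf_neq0; rewrite iterSr iter_fmap_double zf_fmap -exprM fmapE.
set w := zf x ^+ _; have wq : w ^+ q = w by rewrite exprAC zf_frob.
apply/eqP => fx; have wcu1 : w * c * subq x = 1.
  by apply: (mulIf (x_neq0_zf zf_neq0)); rewrite mul1r -[RHS]fx; ring.
have := congr1 (fun y => y ^+ q) wcu1; rewrite !exprMn wq cq subq_frob expr1n => wcu1'.
by move/eqP: two_neq0; apply; rewrite -[2]/(1 + 1) -{1}wcu1 -wcu1'; ring.
Qed.

Lemma iter_fmap_eq d (x : F) n : d.-primitive_root (zf x) ->
  (iter n fmap x == x) = ~~ odd n && (d %| repunit4 n./2)%N.
Proof.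
move=> prim_zf; have zf_neq0 : zf x != 0.
  by rewrite (prim_root_eq0 prim_zf) -lt0n (prim_order_gt0 prim_zf).
rewrite -[in iter n _ _](odd_double_half n) -mul2n; case: (odd n) => /=.
  by rewrite add0n -iterS; apply/negbTE/iter_fmap_odd.
rewrite add0n iter_fmap_double (prim_order_dvd prim_zf).
by rewrite -[X in _ == X]mul1r; apply/eqP/eqP => [/(mulIf (x_neq0_zf zf_neq0)) | ->].
Qed.

Lemma periodic_fmap d (x : F) L : odd d -> d.-primitive_root (zf x) ->
  periodic_of fmap L x = (L == 2 * ordn (3 * d) 4)%N.
Proof.
move=> odd_d prim_zf.
have iterE n : (iter n fmap x == x) = (2 * ordn (3 * d) 4 %| n)%N.
  by rewrite (iter_fmap_eq _ prim_zf) dvdn_repunit4 // dvdn_mul2l_half.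
apply/periodicP/eqP => [[L_gt0 iterLE] | ->]; last by split=> //; exact: iterE.
by apply/eqP; rewrite eqn_dvd -iterLE iterE dvdnn -iterE iterLE dvdnn.
Qed.

Lemma odd_order_periodic e (x : F) L : (1 < L)%N -> e.-primitive_root (zf x) ->
  periodic_of fmap L x -> odd e.
Proof.
move=> L_gt1 prim_zf /periodicP[_ iterLE].
have := iterLE L; rewrite dvdnn (iter_fmap_eq _ prim_zf) => /andP[_ dvd_e].
by apply: dvdn_odd dvd_e (odd_repunit4 _); rewrite half_gt0.
Qed.

Lemma zf_neq0_periodic (x : F) L : (1 < L)%N -> periodic_of fmap L x -> zf x != 0.
Proof.
move=> L_gt1 /periodicP[_ iterE]; apply/eqP => zf0.
have fmap0 : fmap 0 = 0 by rewrite fmapE mulr0 mul0r.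
have x0 : x = 0.
  have /eqP <- : iter L fmap x == x by rewrite iterE.
  by rewrite -(subnK L_gt1) addn2 !iterSr fmap2 zf0 mul0r iter_fix.
by have := iterE 1; rewrite /= x0 fmap0 eqxx dvdn1 => /esym/eqP L1; rewrite L1 in L_gt1.
Qed.

Definition Kq := [set x : F | x ^+ q == x].
Definition Uq := [set x : F | x ^+ q == - x].

Lemma card_frob_eq_mul_le (a : F) : (#|[set x : F | (x ^+ q == a * x)%R]| <= q)%N.
Proof.
pose p : {poly F} := 'X^q - a *: 'X.
have size_p : size p = q.+1.
  rewrite size_polyDl size_polyXn // size_polyN.
  by rewrite (leq_ltn_trans (size_scale_leq _ _)) // size_polyX ltnS q_gt1.
have p_neq0 : p != 0 by rewrite -size_poly_eq0 size_p.
rewrite cardE -ltnS -size_p max_poly_roots ?enum_uniq //.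
by apply/allP => x; rewrite mem_enum inE rootE /p !hornerE => /eqP->; rewrite subrr.
Qed.

Lemma card_Uq_mul_Kq : (#|Uq| * #|Kq| = q * q)%N.
Proof.
pose g x := (subq x, addq x).
have g_inj : injective g.
  by move=> x y [eq_sub eq_add]; rewrite -[x]addq_subqK -[y]addq_subqK eq_sub eq_add.
rewrite -cardsX -card_F -cardsT -(card_imset _ g_inj).
apply: eq_card => -[a b]; rewrite !inE.
apply/andP/imsetP => [[/eqP aq /eqP bq] | [x _ [-> ->]]].
  by exists ((b - a) / 2); rewrite // /g /subq /addq frob_half //; congr (_, _); field.
by rewrite subq_frob addq_frob !eqxx.
Qed.

Lemma card_Uq : #|Uq| = q.
Proof.
have le_Uq : (#|Uq| <= q)%N.
  rewrite (_ : Uq = [set x | x ^+ q == -1 * x]) ?card_frob_eq_mul_le //.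
  by apply/setP => x; rewrite !inE mulN1r.
have le_Kq : (#|Kq| <= q)%N.
  rewrite (_ : Kq = [set x | x ^+ q == 1 * x]) ?card_frob_eq_mul_le //.
  by apply/setP => x; rewrite !inE mul1r.
have := card_Uq_mul_Kq; have := q_gt1; nia.
Qed.

Lemma card_zf_fibre (w : F) : w ^+ q = w -> w != 0 -> #|[set x | zf x == w]| = q.-1.
Proof.
move=> wq w_neq0; set S := [set x | zf x == w].
have subq_neq0 x : x \in S -> subq x != 0.
  rewrite inE => /eqP zfx; apply: contra_neq w_neq0 => sub0.
  by rewrite -zfx /zf sub0 expr0n mulr0.
have addqE x : x \in S -> addq x = - w / (c ^+ 3 * subq x ^+ 2).
  move=> Sx; have := subq_neq0 x Sx; move: Sx; rewrite inE => /eqP <- sub_neq0.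
  by rewrite /zf; field; rewrite c_neq0 sub_neq0.
have subq_inj : {in S &, injective subq}.
  move=> x y Sx Sy eq_sub.
  by rewrite -[x]addq_subqK -[y]addq_subqK (addqE x) // (addqE y) // eq_sub.
rewrite -(card_in_imset subq_inj) (_ : subq @: S = Uq :\ 0).
  by have := cardsD1 0 Uq; rewrite card_Uq inE frob0 oppr0 eqxx => ->.
apply/setP => a; rewrite !inE; apply/imsetP/andP => [[x Sx ->] | [a_neq0 /eqP aq]].
  by rewrite subq_neq0 // subq_frob.
pose b := - w / (c ^+ 3 * a ^+ 2).
have bq : b ^+ q = b.
  by rewrite /b exprMn exprVn exprMn frobN wq exprAC cq exprAC aq sqrrN.
exists ((b - a) / 2); last by rewrite /subq frob_half //; field.
by rewrite inE /zf /addq /subq frob_half // /b; apply/eqP; field; rewrite two_neq0 a_neq0 c_neq0.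
Qed.

Lemma card_zf_primitive d : (d %| q.-1)%N ->
  #|[set x | d.-primitive_root (zf x)]| = (totient d * q.-1)%N.
Proof.
move=> dvd_d_q1; have dvd_d_F : (d %| #|F|.-1)%N.
  apply: dvdn_trans dvd_d_q1 _; apply/dvdnP; exists q.+1.
  by rewrite card_F; have := q_gt1; nia.
rewrite -sum1dep_card (partition_big zf (fun w => d.-primitive_root w)) //=.
rewrite -(card_primitive_roots dvd_d_F) -sum1dep_card big_distrl /=.
apply: eq_bigr => w prim_w; rewrite mul1n -(card_zf_fibre (w := w)); first last.
- by rewrite (prim_root_eq0 prim_w) -lt0n (prim_order_gt0 prim_w).
- have wq1 : w ^+ q.-1 = 1 by apply/eqP; rewrite -(prim_order_dvd prim_w).
  by rewrite -(prednK (ltnW q_gt1)) exprS wq1 mulr1.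
rewrite sum1dep_card; apply: eq_card => x; rewrite !inE.
by case: eqP => [-> | _]; rewrite ?prim_w ?andbF.
Qed.

Variables (s r L : nat).
Hypothesis q1E : q.-1 = (2 ^ s * r)%N.
Hypothesis odd_r : odd r.
Hypothesis L_gt1 : (1 < L)%N.

Lemma periodic_fmap_order e (x : F) : e.-primitive_root (zf x) -> (e %| q.-1)%N ->
  periodic_of fmap L x = (e %| r)%N && (L == 2 * ordn (3 * e) 4)%N.
Proof.
move=> prim_e dvd_e_q1; have [per_x | nper_x] := boolP (periodic_of fmap L x).
  have odd_e := odd_order_periodic L_gt1 prim_e per_x.
  have co_e_2s : coprime e (2 ^ s) by rewrite coprimeXr ?coprimen2.
  by rewrite -(Gauss_dvdr _ co_e_2s) -q1E dvd_e_q1 -(periodic_fmap _ odd_e prim_e).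
apply/esym/negbTE; apply: contra nper_x => /andP[dvd_e_r /eqP ->].
by rewrite (periodic_fmap _ (dvdn_odd dvd_e_r odd_r) prim_e).
Qed.

Lemma periodic_fmap_sum (x : F) :
  periodic_of fmap L x =
    (\sum_(d < r.+1 | (d %| r) && (2 * ordn (3 * d) 4 == L)) d.-primitive_root (zf x))%N
    :> nat.
Proof.
have r_gt0 : (0 < r)%N by case: r odd_r.
have [zf0 | zf_neq0] := eqVneq (zf x) 0.
  rewrite big1 => [|d /andP[dvd_dr _]]; last first.
    apply/eqP; rewrite eqb0 zf0; apply: contraL (dvdn_gt0 r_gt0 dvd_dr) => prim0.
    by rewrite lt0n -(prim_root_eq0 prim0) negbK.
  by apply/eqP; rewrite eqb0; apply/negP => /(zf_neq0_periodic L_gt1); rewrite zf0 eqxx.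
have [e prim_e dvd_e_q1] : {e | e.-primitive_root (zf x) & (e %| q.-1)%N}.
  apply: prim_order_exists; first by rewrite -subn1 subn_gt0 q_gt1.
  by apply: (mulfI zf_neq0); rewrite mulr1 -exprS prednK ?zf_frob // ltnW ?q_gt1.
rewrite (periodic_fmap_order prim_e dvd_e_q1).
rewrite (eq_bigr (fun d : 'I_r.+1 => (d == e :> nat) : nat)) => [|d _]; last first.
  by congr nat_of_bool; apply/idP/eqP => [/prim_order_uniq/(_ prim_e) | ->].
have [/andP[dvd_e_r /eqP Le] | notDe] := boolP ((e %| r)%N && (L == 2 * ordn (3 * e) 4)%N).
  have lt_e_r1 : (e < r.+1)%N by rewrite ltnS dvdn_leq.
  rewrite (bigD1 (Ordinal lt_e_r1)) /= ?dvd_e_r ?Le ?eqxx // big1 // => d /andP[_ ne_d_e].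
  by apply/eqP; rewrite eqb0; apply: contra ne_d_e => /eqP eq_de; apply/eqP/val_inj.
rewrite big1 // => d /andP[dvd_dr /eqP Ld]; case: eqP => // eq_de.
by case/negP: notDe; rewrite -eq_de dvd_dr Ld eqxx.
Qed.

Lemma card_cycles_fmap :
  #|cycles_of_length fmap L| =
    (\sum_(d < r.+1 | (d %| r) && (2 * ordn (3 * d) 4 == L))
        (totient d * q.-1 %/ (2 * ordn (3 * d) 4)))%N.
Proof.
set P := [set x | periodic_of fmap L x].
have cyclesE : cycles_of_length fmap L = cycle_set fmap L @: P.
  by apply/setP => C; apply/imsetP/imsetP => -[x Px ->]; exists x; rewrite ?inE in Px *.
have card_P : #|P| = (\sum_(d < r.+1 | (d %| r) && (2 * ordn (3 * d) 4 == L))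
                        #|[set x | d.-primitive_root (zf x)]|)%N.
  rewrite -sum1dep_card big_mkcond (eq_bigr (fun x => \sum_(d < r.+1 | (d %| r) &&
    (2 * ordn (3 * d) 4 == L)) (d.-primitive_root (zf x) : nat)))%N => [|x _]; last first.
    exact: periodic_fmap_sum.
  by rewrite exchange_big; apply: eq_bigr => d _; rewrite -sum1dep_card [RHS]big_mkcond.
apply/eqP; rewrite -(eqn_pmul2r (ltnW L_gt1)) cyclesE card_cycles_in; first last.
- by move=> x; rewrite inE.
- by move=> x; rewrite !inE => /(periodic_iter 1).
rewrite card_P big_distrl /=; apply/eqP/eq_bigr => d /andP[dvd_dr /eqP L_ord].
set A := [set x | d.-primitive_root (zf x)].
have odd_d := dvdn_odd dvd_dr odd_r.
have dvd_L_A : (L %| #|A|)%N.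
  rewrite -(card_cycles_in (f := fmap) (L := L) (A := A)) ?dvdn_mull // => x;
    rewrite !inE => prim_x.
    by rewrite zf_fmap prim_root_exp_coprime // coprime2n.
  by rewrite (periodic_fmap _ odd_d prim_x) L_ord.
by rewrite L_ord -(card_zf_primitive (dvdn_trans dvd_dr _)) ?divnK // q1E dvdn_mull.
Qed.

End QuadraticMap.

Theorem theorem9 (F : finFieldType) (p k q s r : nat) (c : F) :
  prime p -> odd p -> (0 < k)%N -> q = (p ^ k)%N -> #|F| = (q ^ 2)%N ->
  q.-1 = (2 ^ s * r)%N -> odd r ->
  c != 0 -> c ^+ q = c ->
  forall L : nat, (1 < L)%N ->
    #|cycles_of_length (fun x : F => c * (x ^+ q.+1 - x ^+ 2)) L| =
    (\sum_(d < r.+1 | (d %| r)%N && ((2 * ordn (3 * d) 4)%N == L))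
        (totient d * q.-1 %/ (2 * ordn (3 * d) 4)))%N.
Proof.
move=> p_pr odd_p _ qE card_F2 q1E odd_r c_neq0 cq L L_gt1.
have card_F : #|F| = (q * q)%N by rewrite card_F2 mulnn.
have pchar_p : p \in [pchar F].
  by apply: (@card_finPcharP _ p (k * 2)); rewrite // card_F2 qE expnM.
have frobD (x y : F) : (x + y) ^+ q = x ^+ q + y ^+ q.
  by rewrite exprDn_pchar // qE pnatX (pnatE _ p_pr) pchar_p.
have two_neq0 : (2 : F) != 0.
  rewrite -(dvdn_pcharf pchar_p 2); apply: contraL odd_p.
  by rewrite (dvdn_prime2 p_pr) // => /eqP->.
exact: card_cycles_fmap q1E odd_r L_gt1.
Qed.
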